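(* Suppose that $X(\mathbb{R}^n)$ is a translation-invariant Banach function space. If $w(x):=e^{c|x|}$ for $x\in\mathbb{R}^n$ with a constant $c>0$, then the weighted Banach function space $X(\mathbb{R}^n,w)$ does not satisfy the weak doubling property.
   Context: Banach function spaces: let $\mathfrak{M}^+(\mathbb{R}^n)$ be the set of measurable functions with values in $[0,\infty]$. A Banach function norm $\rho:\mathfrak{M}^+\to[0,\infty]$ satisfies, for all $f,g,f_j\in\mathfrak{M}^+$, $a\ge0$, measurable $E$: (A1) $\rho(f)=0\iff f=0$ a.e., $\rho(af)=a\rho(f)$, $\rho(f+g)\le\rho(f)+\rho(g)$; (A2) $0\le g\le f$ a.e. implies $\rho(g)\le\rho(f)$; (A3) $0\le f_j\uparrow f$ a.e. implies $\rho(f_j)\uparrow\rho(f)$; (A4) $|E|<\infty$ implies $\rho(\chi_E)<\infty$; (A5) $|E|<\infty$ implies $\int_Ef\le C_E\rho(f)$ with $C_E$ independent of $f$. $X(\mathbb{R}^n)$ is the set of measurable complex $f$ with $\rho(|f|)<\infty$, $\|f\|_X=\rho(|f|)$. $X$ is translation-invariant if $\|u(\cdot-y)\|_X=\|u\|_X$ for all $y\in\mathbb{R}^n$, $u\in X$. For a weight $w$, $X(\mathbb{R}^n,w)=\{f: fw\in X\}$ with $\|f\|_{X(\mathbb{R}^n,w)}=\|fw\|_X$. Weak doubling property: a Banach function space $Z(\mathbb{R}^n)$ has it if there is $\tau>1$ with $\liminf_{R\to\infty}\big(\inf_{y\in\mathbb{R}^n}\|\chi_{B(y,\tau R)}\|_{Z}/\|\chi_{B(y,R)}\|_{Z}\big)<\infty$,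 where $B(y,R)$ is the open ball of radius $R$ centered at $y$. *)

From HB Require Import structures.
From mathcomp Require Import all_boot all_order all_algebra.
From mathcomp Require Import all_classical all_reals all_analysis.
From mathcomp Require Import measurable_realfun.
Set Implicit Arguments. Unset Strict Implicit. Unset Printing Implicit Defensive.
Import Order.TTheory GRing.Theory Num.Theory.
Import numFieldNormedType.Exports.
Local Open Scope classical_set_scope.
Local Open Scope ring_scope.

Fixpoint Rp (R : realType) (k : nat) : {d : measure_display & measurableType d} :=
  match k with
  | 0 => existT (fun d => measurableType d) _ (measurableTypeR R : measurableType _)
  | k'.+1 => existT (fun d => measurableType d) _
      ((projT2 (Rp R k') * measurableTypeR R)%type : measurableType _)
  end.

Fixpoint lamp (R : realType) (k : nat) : {measure set (projT2 (Rp R k)) -> \bar R} :=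
  match k with
  | 0 => @lebesgue_measure R
  | k'.+1 => (lamp R k' \x (@lebesgue_measure R))%E
  end.

(** Points of R^n, n = k.+1, are the elements of [Rn R k] (nested pairs);
    [leb R k] is the n-dimensional Lebesgue measure (iterated product of
    the one-dimensional Lebesgue measure). *)
Notation Rn R k := (projT2 (Rp R k)).
Definition leb (R : realType) (k : nat) := lamp R k.

Fixpoint subp (R : realType) (k : nat) : Rn R k -> Rn R k -> Rn R k :=
  match k return Rn R k -> Rn R k -> Rn R k with
  | 0 => fun x y => ((x : R) - (y : R))%R
  | k'.+1 => fun x y => (@subp R k' x.1 y.1, ((x.2 : R) - (y.2 : R))%R)
  end.

Fixpoint sqnormp (R : realType) (k : nat) : Rn R k -> R :=
  match k return Rn R k -> R with
  | 0 => fun x => ((x : R) ^+ 2)%R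
  | k'.+1 => fun x => (@sqnormp R k' x.1 + (x.2 : R) ^+ 2)%R
  end.

Definition normp (R : realType) (k : nat) (x : Rn R k) : R := Num.sqrt (sqnormp x).

Definition ballp (R : realType) (k : nat) (y : Rn R k) (r : R) : set (Rn R k) :=
  [set x | normp (subp x y) < r].

Local Open Scope ereal_scope.

Definition Mplus (R : realType) (k : nat) (f : Rn R k -> \bar R) : Prop :=
  measurable_fun [set: Rn R k] f /\ (forall x, 0 <= f x).

Definition banach_function_norm (R : realType) (k : nat)
    (rho : (Rn R k -> \bar R) -> \bar R) : Prop :=
  let mu := leb R k in
  (forall f, Mplus f -> 0 <= rho f) /\
  (forall f, Mplus f -> (rho f = 0 <-> {ae mu, forall x, f x = 0})) /\
  (forall f (a : R), Mplus f -> (0 <= a)%R ->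
     rho (fun x => a%:E * f x) = a%:E * rho f) /\
  (forall f g, Mplus f -> Mplus g -> rho (f \+ g) <= rho f + rho g) /\
  (forall f g, Mplus f -> Mplus g ->
     {ae mu, forall x, g x <= f x} -> rho g <= rho f) /\
  (forall (F : nat -> Rn R k -> \bar R) f, (forall j, Mplus (F j)) -> Mplus f ->
     {ae mu, forall x, {homo (fun j => F j x) : i j / (i <= j)%N >-> i <= j}
                       /\ (F ^~ x @ \oo --> f x)} ->
     {homo (fun j => rho (F j)) : i j / (i <= j)%N >-> i <= j} /\
     ((fun j => rho (F j)) @ \oo --> rho f)) /\
  (forall E : set (Rn R k), measurable E -> mu E < +oo ->
     rho (fun x => (\1_E x)%:E) < +oo) /\
  (forall E : set (Rn R k), measurable E -> mu E < +oo ->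
     exists C_E : R, forall f, Mplus f ->
       \int[mu]_(x in E) f x <= C_E%:E * rho f).

(** ||u||_X = rho(|u|); X is translation-invariant:
    ||u(. - y)||_X = ||u||_X for all y and all u in X *)
Definition translation_invariant (R : realType) (k : nat)
    (rho : (Rn R k -> \bar R) -> \bar R) : Prop :=
  forall (u : Rn R k -> R) (y : Rn R k),
    measurable_fun [set: Rn R k] u ->
    rho (fun x => (`|u x|)%:E) < +oo ->
    rho (fun x => (`|u (subp x y)|)%:E) = rho (fun x => (`|u x|)%:E).

Definition weighted_norm (R : realType) (k : nat)
    (rho : (Rn R k -> \bar R) -> \bar R) (w : Rn R k -> R) :
    (Rn R k -> \bar R) -> \bar R :=
  fun f => rho (fun x => f x * (w x)%:E).

Definition weak_doubling (R : realType) (k : nat)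
    (rhoZ : (Rn R k -> \bar R) -> \bar R) : Prop :=
  exists tau : R, (1 < tau)%R /\
    limf_einf (fun r : R =>
       ereal_inf [set rhoZ (fun x => (\1_(ballp y (tau * r)) x)%:E) /
                      rhoZ (fun x => (\1_(ballp y r) x)%:E) | y in [set: Rn R k]])
      (pinfty_nbhs R) < +oo.

(* Translation invariance makes the X-norm of the indicator of a cube depend only
   on its half side, and covering a cube by 3^n translates of the cube of half the
   size shows that halving the side m times loses at most the factor 3^(nm).
   On B(y, r) the weight is at most e^{c(|y| + r)}, whereas B(y, tau r) contains a
   cube of half side r / 2^m centred at distance about tau r from y in the
   direction away from the origin, on which the weight is at least
   e^{c(|y| + tau r - 2 n r / 2^m)}.  Once 4 n / 2^m <= tau - 1, the quotient of the
   weighted norms of the two balls is at least e^{c (tau - 1) r / 2} / 3^(nm),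
   uniformly in y, which tends to infinity with r. *)

From HB Require Import structures.
From mathcomp Require Import all_boot all_order all_algebra.
From mathcomp Require Import all_classical all_reals all_analysis.
From mathcomp Require Import measurable_realfun.
From mathcomp Require Import ring lra.
Import Order.TTheory GRing.Theory Num.Theory.
Set Implicit Arguments. Unset Strict Implicit. Unset Printing Implicit Defensive.
Local Open Scope classical_set_scope.
Local Open Scope ring_scope.

Section Euclidean.
Variable R : realType.

Fixpoint addp (k : nat) : Rn R k -> Rn R k -> Rn R k :=
  match k return Rn R k -> Rn R k -> Rn R k with
  | 0 => fun x y => (x : R) + y
  | k'.+1 => fun x y => (@addp k' x.1 y.1, (x.2 : R) + y.2)
  end.

Fixpoint scalep (k : nat) (a : R) : Rn R k -> Rn R k :=
  match k return Rn R k -> Rn R k with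
  | 0 => fun x => a * (x : R)
  | k'.+1 => fun x => (@scalep k' a x.1, a * (x.2 : R))
  end.

Fixpoint zerop (k : nat) : Rn R k :=
  match k return Rn R k with
  | 0 => 0 : R
  | k'.+1 => (@zerop k', 0 : R)
  end.

Fixpoint e0p (k : nat) : Rn R k :=
  match k return Rn R k with
  | 0 => 1 : R
  | k'.+1 => (@e0p k', 0 : R)
  end.

Fixpoint cubep (k : nat) (L : R) : set (Rn R k) :=
  match k return set (Rn R k) with
  | 0 => [set v : R | `|v| < L]
  | k'.+1 => @cubep k' L `*` [set v : R | `|v| < L]
  end.

Arguments zerop : clear implicits.
Arguments e0p : clear implicits.
Arguments cubep : clear implicits.

Lemma addp_subp k (x y : Rn R k) : addp (subp x y) y = x.
Proof. by elim: k x y => [|k IH] x y /=; rewrite ?IH subrK // -surjective_pairing. Qed.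

Lemma subp_addpr k (x y : Rn R k) : subp (addp x y) x = y.
Proof. by elim: k x y => [|k IH] x y /=; rewrite ?IH addrC addKr // -surjective_pairing. Qed.

Lemma subp_addp k (x y z : Rn R k) : subp x y = addp (subp x z) (subp z y).
Proof. by elim: k x y z => [|k IH] x y z /=; rewrite -?IH addrA subrK. Qed.

Lemma subp0 k (x : Rn R k) : subp x (zerop k) = x.
Proof. by elim: k x => [|k IH] x /=; rewrite ?IH subr0 // -surjective_pairing. Qed.

Lemma addp_scalep k (a : R) (x : Rn R k) : addp x (scalep a x) = scalep (1 + a) x.
Proof. by elim: k x => [|k IH] x /=; rewrite ?IH mulrDl mul1r. Qed.

Lemma sqnormp_ge0 k (x : Rn R k) : 0 <= sqnormp x.
Proof. by elim: k x => [|k IH] x /=; rewrite ?addr_ge0 ?sqr_ge0. Qed.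

Lemma normp_ge0 k (x : Rn R k) : 0 <= normp x.
Proof. exact: sqrtr_ge0. Qed.

Lemma normp0E (x : Rn R 0) : normp x = `|x : R|.
Proof. exact: sqrtr_sqr. Qed.

Lemma normpSE k (x : Rn R k.+1) : normp x = Num.sqrt (normp x.1 ^+ 2 + x.2 ^+ 2).
Proof. by rewrite sqr_sqrtr ?sqnormp_ge0. Qed.

Lemma normp_fst_le k (x : Rn R k.+1) : normp x.1 <= normp x.
Proof.
rewrite normpSE -{1}(ger0_norm (normp_ge0 x.1)) -sqrtr_sqr.
by rewrite ler_sqrt ?addr_ge0 ?sqr_ge0 // lerDl sqr_ge0.
Qed.

Lemma normr_snd_le k (x : Rn R k.+1) : `|x.2| <= normp x.
Proof.
rewrite normpSE -sqrtr_sqr.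
by rewrite ler_sqrt ?addr_ge0 ?sqr_ge0 // lerDr sqr_ge0.
Qed.

Lemma normpS_le k (x : Rn R k.+1) : normp x <= normp x.1 + `|x.2|.
Proof.
have p0 := normp_ge0 x.1.
rewrite normpSE -(ger0_norm (addr_ge0 p0 (normr_ge0 x.2))) -sqrtr_sqr.
rewrite ler_sqrt ?addr_ge0 ?sqr_ge0 // sqrrD [`|x.2| ^+ 2]real_normK ?num_real //.
by rewrite -addrA lerD2l lerDr mulrn_wge0 ?mulr_ge0.
Qed.

Lemma minkowski2 (p q a b : R) :
  Num.sqrt ((p + q) ^+ 2 + (a + b) ^+ 2) <=
  Num.sqrt (p ^+ 2 + a ^+ 2) + Num.sqrt (q ^+ 2 + b ^+ 2).
Proof.
set u := Num.sqrt (p ^+ 2 + a ^+ 2); set v := Num.sqrt (q ^+ 2 + b ^+ 2).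
have [u0 v0] : 0 <= u /\ 0 <= v by split; exact: sqrtr_ge0.
have uE : u ^+ 2 = p ^+ 2 + a ^+ 2 by rewrite sqr_sqrtr ?addr_ge0 ?sqr_ge0.
have vE : v ^+ 2 = q ^+ 2 + b ^+ 2 by rewrite sqr_sqrtr ?addr_ge0 ?sqr_ge0.
have cauchy_schwarz : p * q + a * b <= u * v.
  have lagrange : (p * q + a * b) ^+ 2 + (p * b - q * a) ^+ 2 = (u * v) ^+ 2.
    by rewrite exprMn uE vE; ring.
  rewrite (le_trans (ler_norm _)) // -sqrtr_sqr -(ger0_norm (mulr_ge0 u0 v0)).
  by rewrite -sqrtr_sqr ler_sqrt ?sqr_ge0 // -lagrange lerDl sqr_ge0.
by rewrite -(ger0_norm (addr_ge0 u0 v0)) -sqrtr_sqr ler_sqrt ?sqr_ge0 //; nra.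
Qed.

Lemma normp_addp_le k (x y : Rn R k) : normp (addp x y) <= normp x + normp y.
Proof.
elim: k x y => [|k IH] x y; first by rewrite !normp0E ler_normD.
rewrite (normpSE (addp x y)) (normpSE x) (normpSE y).
apply: le_trans (minkowski2 _ _ _ _); rewrite ler_sqrt ?addr_ge0 ?sqr_ge0 //.
by rewrite lerD2r ler_pXn2r ?nnegrE ?addr_ge0 ?normp_ge0 ?IH.
Qed.

Lemma normp_subpp k (x : Rn R k) : normp (subp x x) = 0.
Proof.
rewrite -sqrtr0; congr Num.sqrt.
by elim: k x => [|k IH] x /=; rewrite ?IH subrr expr0n ?addr0.
Qed.

Lemma normp_subpC k (x y : Rn R k) : normp (subp x y) = normp (subp y x).
Proof.
congr Num.sqrt.
elim: k x y => [|k IH] x y /=; first by rewrite -sqrrN opprB.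
by rewrite IH -sqrrN opprB.
Qed.

Lemma normp_subp_le k (x y z : Rn R k) :
  normp (subp x y) <= normp (subp x z) + normp (subp z y).
Proof. by rewrite (subp_addp x y z) normp_addp_le. Qed.

Lemma normp_le_subp k (x y : Rn R k) : normp x <= normp (subp x y) + normp y.
Proof. by rewrite -{1}(addp_subp x y) normp_addp_le. Qed.

Lemma normp_subp_leD k (x y : Rn R k) : normp (subp x y) <= normp x + normp y.
Proof.
apply: le_trans (normp_subp_le x y (zerop k)) _.
by rewrite subp0 [normp (subp (zerop k) y)]normp_subpC subp0.
Qed.

Lemma normp_scalep k (a : R) (x : Rn R k) : normp (scalep a x) = `|a| * normp x.
Proof.
rewrite -sqrtr_sqr -sqrtrM ?sqr_ge0 //; congr Num.sqrt.
by elim: k x => [|k IH] x /=; rewrite ?IH exprMn // mulrDr.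
Qed.

Lemma normp_e0p k : normp (e0p k) = 1.
Proof.
rewrite /normp -[RHS]sqrtr1; congr Num.sqrt.
by elim: k => [|k IH] /=; [exact: expr1n | rewrite IH expr0n addr0].
Qed.

Lemma exists_far_point k (y : Rn R k) (t : R) : 0 <= t ->
  exists z, normp (subp z y) = t /\ normp y + t <= normp z.
Proof.
move=> t0; have [y0|y_neq0] := eqVneq (normp y) 0.
  exists (addp y (scalep t (e0p k))).
  rewrite subp_addpr normp_scalep normp_e0p mulr1 ger0_norm // y0 add0r.
  split=> //; have := normp_subp_leD (addp y (scalep t (e0p k))) y.
  by rewrite subp_addpr normp_scalep normp_e0p mulr1 ger0_norm // y0 addr0.
have y_gt0 : 0 < normp y by rewrite lt_def y_neq0 normp_ge0.
exists (addp y (scalep (t / normp y) y)).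
rewrite subp_addpr addp_scalep !normp_scalep.
by rewrite !ger0_norm ?addr_ge0 ?divr_ge0 ?normp_ge0 // mulrDl mul1r divfK.
Qed.

Lemma normp_lt_cubep k (L : R) (v : Rn R k) : normp v < L -> cubep k L v.
Proof.
elim: k v => [|k IH] v; first by rewrite normp0E.
move=> vL; split; first exact/IH/(le_lt_trans (normp_fst_le v)).
exact: le_lt_trans (normr_snd_le v) vL.
Qed.

Lemma cubep_normp_lt k (L : R) (v : Rn R k) : cubep k L v -> normp v < k.+1%:R * L.
Proof.
elim: k v => [|k IH] v; first by rewrite normp0E mul1r.
move=> [/IH v1 v2]; apply: le_lt_trans (normpS_le v) _.
by rewrite -[k.+2]addn1 natrD mulrDl mul1r ltrD.
Qed.

End Euclidean.

Arguments cubep {R}.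

Section Measurability.
Variable R : realType.

Lemma subp_measurable k (y : Rn R k) : measurable_fun setT (fun x : Rn R k => subp x y).
Proof.
elim: k y => [|k IH] y /=; first exact: measurable_funB.
apply: measurable_fun_pair; first exact: measurableT_comp (IH y.1) measurable_fst.
by apply: measurable_funB => //; exact: measurable_snd.
Qed.

Lemma sqnormp_measurable k : measurable_fun setT (@sqnormp R k).
Proof.
elim: k => [|k IH] /=; first exact: exprn_measurable.
apply: measurable_funD; first exact: measurableT_comp IH measurable_fst.
by apply: measurable_funX; exact: measurable_snd.
Qed.

Lemma normp_measurable k : measurable_fun setT (@normp R k).
Proof.
change (measurable_fun setT ((@Num.sqrt R) \o (@sqnormp R k))).
exact: measurableT_comp (continuous_measurable_fun (@sqrt_continuous R))
  (@sqnormp_measurable k).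
Qed.

Lemma ballp_measurable k (y : Rn R k) (r : R) : measurable (ballp y r).
Proof.
have -> : ballp y r = (@normp R k \o (fun x => subp x y)) @^-1` `]-oo, r[.
  by apply/seteqP; split => x /=; rewrite in_itv.
rewrite -[_ @^-1` _]setTI; apply: (measurableT_comp (@normp_measurable k)) => //.
exact: subp_measurable.
Qed.

Lemma interval_normr_lt (L : R) : [set v : R | `|v| < L] = `]-L, L[%classic.
Proof. by apply/seteqP; split => v /=; rewrite in_itv /= ltr_norml. Qed.

Lemma cubep_measurable k (L : R) : measurable (cubep k L).
Proof.
have mI : measurable [set v : R | `|v| < L] by rewrite interval_normr_lt.
by elim: k => [|k IH] //=; exact: measurableX.
Qed.

Lemma leb_cubep k (L : R) : 0 < L -> leb R k (cubep k L) = ((2 * L) ^+ k.+1)%:E.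
Proof.
move=> L0; have lebI : lebesgue_measure [set v : R | `|v| < L] = (2 * L)%:E.
  rewrite interval_normr_lt lebesgue_measure_itv /= lte_fin gtrN //.
  by rewrite -EFinD opprK -mulr2n mulr_natl.
rewrite /leb; elim: k => [|k IH] /=; first exact: lebI.
rewrite product_measure1E; [|exact: cubep_measurable|by rewrite interval_normr_lt].
by rewrite IH [in RHS]exprSr EFinM; f_equal; exact: lebI.
Qed.

End Measurability.

Lemma has_allpairs (S T U : Type) (f : S -> T -> U) (P : pred U) s t :
  has P [seq f x y | x <- s, y <- t] = has (fun x => has (fun y => P (f x y)) t) s.
Proof. by elim: s => //= x s IH; rewrite has_cat has_map IH. Qed.

Lemma sum_indic_ge1 (R : realType) (I T : Type) (A : set T) (f : I -> T) (s : seq I) :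
  has (fun i => f i \in A) s -> 1 <= \sum_(i <- s) \1_A (f i) :> R.
Proof.
have indic_ge0 i : 0 <= \1_A (f i) :> R by rewrite indicE.
elim: s => //= i s IH; rewrite big_cons => /orP[fiA|/IH].
  by rewrite indicE fiA lerDl sumr_ge0.
by move=> /le_trans; apply; rewrite lerDr.
Qed.

Section Covering.
Variable R : realType.

Fixpoint corners (k : nat) (L : R) : seq (Rn R k) :=
  match k return seq (Rn R k) with
  | 0 => [:: -L; 0; L]
  | k'.+1 => [seq (c, d) | c <- corners k' L, d <- [:: -L; 0; L]]
  end.

Lemma size_corners k (L : R) : size (corners k L) = (3 ^ k.+1)%N.
Proof.
elim: k => [|k IH] //.
rewrite -[corners _ L]/(allpairs pair (corners k L) [:: -L; 0; L]).
by rewrite size_allpairs IH [RHS]expnSr.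
Qed.

Lemma interval_cover (L a : R) : 0 < L -> `|a| < 2 * L ->
  has (fun d => `|a - d| < L) [:: -L; 0; L].
Proof.
move=> L0; rewrite ltr_norml => /andP[a_gt a_lt] /=; rewrite subr0 !ltr_norml.
have [a_le|a_gt'] := lerP a (- L / 2).
  by apply/orP; left; apply/andP; split; lra.
apply/orP; right; have [a_ge|a_lt'] := lerP (L / 2) a.
  by apply/orP; right; apply/orP; left; apply/andP; split; lra.
by apply/orP; left; apply/andP; split; lra.
Qed.

Lemma cube_cover k (L : R) (v : Rn R k) : 0 < L -> cubep k (2 * L) v ->
  has (fun c => subp v c \in cubep k L) (corners k L).
Proof.
move=> L0; elim: k v => [|k IH] v.
  by move=> /(interval_cover L0); apply: sub_has => d dv; exact: mem_set.
move=> [/IH v1 /(interval_cover L0) v2].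
rewrite -[corners _ L]/(allpairs pair (corners k L) [:: -L; 0; L]) has_allpairs.
apply: sub_has v1 => c /set_mem c1; apply: sub_has v2 => d d2.
by apply: mem_set; split.
Qed.

End Covering.

Section FunctionNorm.
Variables (R : realType) (k : nat) (rho : (Rn R k -> \bar R) -> \bar R).
Hypothesis rho_bfn : banach_function_norm rho.

Definition nonneg_mfun (f : Rn R k -> R) :=
  measurable_fun setT f /\ forall x, 0 <= f x.

Lemma nonneg_mfun_Mplus f : nonneg_mfun f -> Mplus (fun x => (f x)%:E).
Proof. by move=> [mf f0]; split; [exact/measurable_EFinP | move=> x; rewrite lee_fin]. Qed.

Lemma nonneg_mfun_indic (A : set (Rn R k)) : measurable A -> nonneg_mfun \1_A.
Proof. by move=> mA; split; [exact: measurable_indic | move=> x; rewrite indicE ler0n]. Qed.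

Lemma nonneg_mfunD f g : nonneg_mfun f -> nonneg_mfun g -> nonneg_mfun (f \+ g).
Proof.
move=> [mf f0] [mg g0]; split; first exact: measurable_funD.
by move=> x; rewrite addr_ge0.
Qed.

Lemma nonneg_mfunZ (a : R) f : 0 <= a -> nonneg_mfun f -> nonneg_mfun (fun x => a * f x).
Proof.
move=> a0 [mf f0]; split; last by move=> x; rewrite mulr_ge0.
by apply: measurable_funM => //; exact: measurable_cst.
Qed.

Lemma nonneg_mfun_shift (u : Rn R k -> R) y :
  nonneg_mfun u -> nonneg_mfun (fun x => u (subp x y)).
Proof.
move=> [mu u0]; split=> [|x //].
exact: (measurableT_comp mu (subp_measurable y)).
Qed.

Lemma rho_ge0 f : nonneg_mfun f -> (0 <= rho (fun x => (f x)%:E))%E.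
Proof. by move=> /nonneg_mfun_Mplus; case: rho_bfn => rho0 _; exact: rho0. Qed.

Lemma le_rho f g : nonneg_mfun f -> nonneg_mfun g -> (forall x, f x <= g x) ->
  (rho (fun x => (f x)%:E) <= rho (fun x => (g x)%:E))%E.
Proof.
case: rho_bfn => _ [_ [_ [_ [rho_mono _]]]] mf mg fg.
by apply: rho_mono; [exact: nonneg_mfun_Mplus.. | exact: aeW].
Qed.

Lemma rhoZ (a : R) f : 0 <= a -> nonneg_mfun f ->
  rho (fun x => (a * f x)%:E) = (a%:E * rho (fun x => (f x)%:E))%E.
Proof.
case: rho_bfn => _ [_ [rho_hom _]] a0 /nonneg_mfun_Mplus mf.
by rewrite -rho_hom.
Qed.

Lemma rhoD_le f g : nonneg_mfun f -> nonneg_mfun g ->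
  (rho (fun x => (f x + g x)%:E) <= rho (fun x => (f x)%:E) + rho (fun x => (g x)%:E))%E.
Proof.
case: rho_bfn => _ [_ [_ [rho_subadd _]]] /nonneg_mfun_Mplus mf /nonneg_mfun_Mplus mg.
by under eq_fun do rewrite EFinD; exact: rho_subadd.
Qed.

Lemma rho0 : rho (fun=> 0%:E) = 0%E.
Proof.
have m0 : nonneg_mfun (fun=> 0) by split=> //; exact: measurable_cst.
case: rho_bfn => _ [rho_eq0 _].
by apply/rho_eq0; [exact: nonneg_mfun_Mplus m0 | exact: aeW].
Qed.

Lemma nonneg_mfun_sum (I : Type) (s : seq I) (F : I -> Rn R k -> R) :
  (forall i, nonneg_mfun (F i)) -> nonneg_mfun (fun x => \sum_(i <- s) F i x).
Proof.
move=> mF; elim: s => [|i s ms].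
  by under eq_fun do rewrite big_nil; split=> //; exact: measurable_cst.
by under eq_fun do rewrite big_cons; exact: nonneg_mfunD.
Qed.

Lemma rho_sum_le (I : Type) (s : seq I) (F : I -> Rn R k -> R) (a : R) :
  (forall i, nonneg_mfun (F i)) -> (forall i, (rho (fun x => (F i x)%:E) <= a%:E)%E) ->
  (rho (fun x => (\sum_(i <- s) F i x)%:E) <= ((size s)%:R * a)%:E)%E.
Proof.
move=> mF rhoF; elim: s => [|i s rhos].
  by under eq_fun do rewrite big_nil; rewrite rho0 mul0r.
under eq_fun do rewrite big_cons.
apply: le_trans (rhoD_le (mF i) (nonneg_mfun_sum s mF)) _.
by rewrite /= -add1n natrD mulrDl mul1r EFinD leeD.
Qed.

Lemma rho_indic_lty (A : set (Rn R k)) : measurable A -> (leb R k A < +oo)%E ->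
  (rho (fun x => (\1_A x)%:E) < +oo)%E.
Proof. by case: rho_bfn => _ [_ [_ [_ [_ [_ [rho_fin _]]]]]]; exact: rho_fin. Qed.

Lemma rho_indic_gt0 (A : set (Rn R k)) : measurable A -> (0 < leb R k A)%E ->
  (0 < rho (fun x => (\1_A x)%:E))%E.
Proof.
move=> mA A_gt0; rewrite lt0e rho_ge0 ?andbT; last exact: nonneg_mfun_indic.
apply/eqP; case: rho_bfn => _ [rho_eq0 _].
move=> /(rho_eq0 _ (nonneg_mfun_Mplus (nonneg_mfun_indic mA))) [N [mN N0 AN]].
suff : (leb R k A <= leb R k N)%E by rewrite N0 leNgt A_gt0.
apply: le_measure; rewrite ?inE // => x Ax; apply: AN => /=.
by rewrite indicE mem_set // => -[/eqP]; rewrite oner_eq0.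
Qed.

End FunctionNorm.

Section CubeNorm.
Variables (R : realType) (k : nat) (rho : (Rn R k -> \bar R) -> \bar R).
Hypotheses (rho_bfn : banach_function_norm rho) (rho_ti : translation_invariant rho).

Lemma rho_shift (u : Rn R k -> R) y : nonneg_mfun u ->
  (rho (fun x => (u x)%:E) < +oo)%E ->
  rho (fun x => (u (subp x y))%:E) = rho (fun x => (u x)%:E).
Proof.
move=> [mu u0].
have normuE : (fun x => (`|u x|)%:E) = (fun x => (u x)%:E).
  by apply/funext => x; rewrite ger0_norm.
have normu_shiftE : (fun x => (`|u (subp x y)|)%:E) = (fun x => (u (subp x y))%:E).
  by apply/funext => x; rewrite ger0_norm.
by rewrite -normuE -normu_shiftE; exact: rho_ti.
Qed.

Definition cube_norm (L : R) := fine (rho (fun x => (\1_(cubep k L) x)%:E)).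

Lemma rho_cubeE (L : R) : 0 < L ->
  rho (fun x => (\1_(cubep k L) x)%:E) = (cube_norm L)%:E.
Proof.
move=> L0; have mC := cubep_measurable k L.
rewrite fineK // ge0_fin_numE ?rho_ge0 ?nonneg_mfun_indic //.
by rewrite rho_indic_lty // leb_cubep // ltry.
Qed.

Lemma cube_norm_gt0 (L : R) : 0 < L -> 0 < cube_norm L.
Proof.
move=> L0; rewrite -lte_fin -rho_cubeE // rho_indic_gt0 //; first exact: cubep_measurable.
by rewrite leb_cubep // lte_fin exprn_gt0 // mulr_gt0.
Qed.

Lemma rho_cube_shift (L : R) y : 0 < L ->
  rho (fun x => (\1_(cubep k L) (subp x y))%:E) = (cube_norm L)%:E.
Proof.
move=> L0; have mC := nonneg_mfun_indic (cubep_measurable k L).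
by rewrite rho_shift //; [exact: rho_cubeE | rewrite rho_cubeE // ltry].
Qed.

Lemma cube_norm_double (L : R) : 0 < L ->
  cube_norm (2 * L) <= (3 ^ k.+1)%:R * cube_norm L.
Proof.
move=> L0; rewrite -lee_fin -rho_cubeE ?mulr_gt0 // -(size_corners k L).
have mshift c := nonneg_mfun_shift c (nonneg_mfun_indic (cubep_measurable k L)).
apply: le_trans (rho_sum_le rho_bfn (corners k L) mshift _); last first.
  by move=> c; rewrite rho_cube_shift.
apply: le_rho => //; first exact/nonneg_mfun_indic/cubep_measurable.
  exact: nonneg_mfun_sum.
move=> x; rewrite indicE; case: (boolP (x \in _)) => [/set_mem x2L|_].
  exact/sum_indic_ge1/cube_cover.
by rewrite sumr_ge0 // => ? _; rewrite indicE.
Qed.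

Lemma cube_norm_halve (L : R) m : 0 < L ->
  cube_norm L <= (3 ^ k.+1)%:R ^+ m * cube_norm (L / 2 ^+ m).
Proof.
move=> L0; elim: m => [|m IH]; first by rewrite expr0 mul1r divr1.
apply: le_trans IH _; rewrite exprSr -mulrA ler_pM2l ?exprn_gt0 ?ltr0n ?expn_gt0 //.
have -> : L / 2 ^+ m = 2 * (L / 2 ^+ m.+1) by rewrite exprS; field.
by rewrite cube_norm_double ?divr_gt0 ?exprn_gt0.
Qed.

End CubeNorm.

Lemma exists_pow2_le (R : archiRealFieldType) (a e : R) :
  0 < e -> exists m, a / 2 ^+ m <= e.
Proof.
move=> e0; exists (Num.truncn (a / e)).+1.
have pow2_ge : (Num.truncn (a / e)).+1%:R <= 2 ^+ (Num.truncn (a / e)).+1 :> R.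
  by rewrite -natrX ler_nat ltnW // ltn_expl.
rewrite ler_pdivrMr ?exprn_gt0 // mulrC -ler_pdivrMr //.
exact/ltW/(lt_le_trans (truncnS_gt _) pow2_ge).
Qed.

Lemma expR_div_near_pinfty (R : realType) (a b M : R) : 0 < a -> 0 < b ->
  \forall r \near +oo, M <= expR (a * r) / b.
Proof.
move=> a0 b0; near=> r.
have : M * b / a < r by near: r; apply: nbhs_pinfty_gt; exact: num_real.
rewrite ltr_pdivrMr // => Mb_lt.
by rewrite ler_pdivlMr //; apply: le_trans (expR_ge1Dx _); lra.
Unshelve. all: end_near.
Qed.

Lemma limf_einf_eq_pinfty (T : choiceType) (X : filteredType T) (R : realType)
    (f : X -> \bar R) (F : set_system X) :
  (forall M : R, \forall t \near F, (M%:E <= f t)%E) -> limf_einf f F = +oo%E.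
Proof.
move=> f_ge; apply: eq_infty => M; rewrite limf_einfE; apply: le_ereal_sup_tmp.
exists (ereal_inf (f @` [set t | (M%:E <= f t)%E])).
  by exists [set t | (M%:E <= f t)%E]; first exact: f_ge.
by apply: le_ereal_inf_tmp => _ [t Mt <-].
Qed.

Section ExponentialWeight.
Variables (R : realType) (k : nat) (rho : (Rn R k -> \bar R) -> \bar R) (c : R).
Hypotheses (rho_bfn : banach_function_norm rho) (rho_ti : translation_invariant rho).
Hypothesis c_gt0 : 0 < c.

Definition exp_weight (x : Rn R k) := expR (c * normp x).

Lemma nonneg_mfun_ball_weight y r :
  nonneg_mfun (fun x : Rn R k => \1_(ballp y r) x * exp_weight x).
Proof.
split=> [|x]; last by rewrite mulr_ge0 ?expR_ge0 // indicE.
apply: measurable_funM; first exact/measurable_indic/ballp_measurable.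
rewrite /exp_weight; change (measurable_fun setT (expR \o (fun x : Rn R k => c * normp x))).
apply: measurableT_comp; first exact: measurable_expR.
by apply: measurable_funM; [exact: measurable_cst | exact: normp_measurable].
Qed.

Lemma rho_ball_weight_le y r : 0 < r ->
  (rho (fun x => (\1_(ballp y r) x * exp_weight x)%:E) <=
   (expR (c * (normp y + r)) * cube_norm rho r)%:E)%E.
Proof.
move=> r0; have mC := nonneg_mfun_shift y (nonneg_mfun_indic (cubep_measurable k r)).
rewrite EFinM -(rho_cube_shift rho_bfn rho_ti y r0) -(rhoZ rho_bfn) ?expR_ge0 //.
apply: (le_rho rho_bfn) (nonneg_mfun_ball_weight y r) (nonneg_mfunZ (expR_ge0 _) mC) _ => x.
rewrite !indicE; case: (boolP (x \in _)) => [/set_mem xy|_]; last first.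
  by rewrite mul0r mulr_ge0 ?expR_ge0.
rewrite mem_set ?mul1r ?mulr1; last exact: normp_lt_cubep.
rewrite /exp_weight ler_expR ler_pM2l // addrC.
by rewrite (le_trans (normp_le_subp x y)) ?lerD2r ?ltW.
Qed.

Lemma cube_weight_le_rho_ball y z r s : 0 < s -> k.+1%:R * s + normp (subp z y) <= r ->
  ((expR (c * (normp z - k.+1%:R * s)) * cube_norm rho s)%:E <=
   rho (fun x => (\1_(ballp y r) x * exp_weight x)%:E))%E.
Proof.
move=> s0 zr; have mC := nonneg_mfun_shift z (nonneg_mfun_indic (cubep_measurable k s)).
rewrite EFinM -(rho_cube_shift rho_bfn rho_ti z s0) -(rhoZ rho_bfn) ?expR_ge0 //.
apply: (le_rho rho_bfn) (nonneg_mfunZ (expR_ge0 _) mC) (nonneg_mfun_ball_weight y r) _ => x.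
rewrite !indicE; case: (boolP (_ \in _)) => [/set_mem/cubep_normp_lt xz|_]; last first.
  by rewrite mulr0 mulr_ge0 ?expR_ge0.
have := normp_subp_le x y z; have := normp_le_subp z x; rewrite normp_subpC => zx xyz.
rewrite mem_set ?mul1r ?mulr1 /=; last by rewrite /ballp /=; lra.
by rewrite /exp_weight ler_expR ler_pM2l //; lra.
Qed.

Lemma rho_ball_weight_fin_gt0 y r : 0 < r ->
  exists2 d, rho (fun x => (\1_(ballp y r) x * exp_weight x)%:E) = d%:E & 0 < d.
Proof.
move=> r0; have s0 : 0 < r / k.+1%:R by rewrite divr_gt0.
have ns : k.+1%:R * (r / k.+1%:R) + normp (subp y y) <= r.
  by rewrite normp_subpp addr0 mulrC divfK.
have := cube_weight_le_rho_ball s0 ns; have := rho_ball_weight_le y r0.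
case: (rho _) => [d _ | | ]; last 2 first.
- by rewrite leye_eq.
- by rewrite leeNy_eq.
rewrite lee_fin => d_ge; exists d => //.
by apply: lt_le_trans d_ge; rewrite mulr_gt0 ?expR_gt0 ?(cube_norm_gt0 rho_bfn).
Qed.

Lemma weighted_ball_ratio_ge y (tau r : R) m : 0 < r ->
  k.+1%:R / 2 ^+ m <= (tau - 1) / 4 ->
  ((expR (c * (tau - 1) / 2 * r) / (3 ^ k.+1)%:R ^+ m)%:E <=
   weighted_norm rho exp_weight (fun x => (\1_(ballp y (tau * r)) x)%:E) /
   weighted_norm rho exp_weight (fun x => (\1_(ballp y r) x)%:E))%E.
Proof.
move=> r0 small_m.
have weightedE r' : weighted_norm rho exp_weight (fun x => (\1_(ballp y r') x)%:E) =
    rho (fun x => (\1_(ballp y r') x * exp_weight x)%:E).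
  by rewrite /weighted_norm; congr rho; apply/funext => x; rewrite EFinM.
rewrite !weightedE; have [d dE d_gt0] := rho_ball_weight_fin_gt0 y r0.
have d_le := rho_ball_weight_le y r0; rewrite dE lee_fin in d_le.
rewrite dE inver gt_eqF // lee_pdivlMr // -EFinM.
set s := r / 2 ^+ m; set n : R := k.+1%:R in small_m *; set K : R := (3 ^ k.+1)%:R.
have s0 : 0 < s by rewrite divr_gt0 ?exprn_gt0.
have ns_le : n * s <= (tau - 1) / 4 * r.
  by rewrite /s mulrCA mulrC; apply: ler_wpM2r; [exact: ltW | exact: small_m].
have tau_gt1 : 1 < tau.
  have : 0 < n / 2 ^+ m by rewrite divr_gt0 ?exprn_gt0 ?ltr0n.
  by move: small_m; lra.
have r_le : r <= tau * r by rewrite ler_peMl ?ltW.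
have [z [zy z_far]] := @exists_far_point _ _ y (tau * r - n * s) ltac:(lra).
have z_in : n * s + normp (subp z y) <= tau * r by rewrite zy; lra.
apply: le_trans (cube_weight_le_rho_ball s0 z_in); rewrite lee_fin.
have Km_gt0 : 0 < K ^+ m by rewrite exprn_gt0 // ltr0n expn_gt0.
have d_le' : d <= expR (c * (normp y + r)) * (K ^+ m * cube_norm rho s).
  by apply: le_trans d_le _; rewrite ler_pM2l ?expR_gt0 ?cube_norm_halve.
rewrite mulrAC ler_pdivrMr //; apply: le_trans (ler_wpM2l (expR_ge0 _) d_le') _.
have KQ_ge0 : 0 <= K ^+ m * cube_norm rho s.
  by rewrite mulr_ge0 ?ltW ?(cube_norm_gt0 rho_bfn).
suff : expR (c * (tau - 1) / 2 * r) * expR (c * (normp y + r)) <=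
       expR (c * (normp z - n * s)).
  by move: KQ_ge0; nra.
rewrite -expRD ler_expR.
have -> : c * (tau - 1) / 2 * r + c * (normp y + r) =
  c * ((tau - 1) / 2 * r + (normp y + r)) by ring.
by rewrite ler_pM2l //; lra.
Qed.

End ExponentialWeight.

Theorem theorem3p7 (R : realType) (k : nat)
    (rho : (Rn R k -> \bar R) -> \bar R) (c : R) :
  banach_function_norm rho ->
  translation_invariant rho ->
  0 < c ->
  ~ weak_doubling (weighted_norm rho (fun x : Rn R k => expR (c * normp x))).
Proof.
move=> rho_bfn rho_ti c_gt0 [tau [tau_gt1]].
have [m small_m] := @exists_pow2_le R k.+1%:R ((tau - 1) / 4) ltac:(lra).
rewrite limf_einf_eq_pinfty ?ltxx // => M.
have a_gt0 : 0 < c * (tau - 1) / 2 by rewrite divr_gt0 // mulr_gt0 // subr_gt0.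
near=> r; apply: le_ereal_inf_tmp => _ [y _ <-].
have r_gt0 : 0 < r by near: r; exact: nbhs_pinfty_gt.
apply: le_trans (weighted_ball_ratio_ge rho_bfn rho_ti c_gt0 y r_gt0 small_m).
by rewrite lee_fin; near: r; apply: expR_div_near_pinfty.
Unshelve. all: end_near.
Qed.
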